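(* Let $k$ be a positive integer and let $G$ be an $n$-vertex connected graph with $\operatorname{diam}(G)\ge k+1$ and minimum degree $\delta$. Let $S$ be a $k$-independent set in $G$, and let $i$ be an integer with $3\le i\le \frac{k}{2}-1$. Then $$|N^{i-1}(S)|+|N^i(S)|+|N^{i+1}(S)|\ge 3|S|,$$ and, if $\delta\ge 2$, $$|N^{i-1}(S)|+|N^i(S)|+|N^{i+1}(S)|\ge (\delta+1)|S|.$$
   Context: All graphs are finite, simple and undirected. For vertices $u,v$, $d(u,v)$ is the length of a shortest $u$–$v$ path, and $\operatorname{diam}(G)$ is the maximum distance between two vertices. For a nonnegative integer $k$, a $k$-independent set in $G$ is a set $S\subseteq V(G)$ such that any two distinct vertices of $S$ are at distance greater than $k$. For $S\subseteq V(G)$, $N(S)$ denotes the set of vertices adjacent to some vertex of $S$. Set $N^0(S)=S$, $N^1(S)=N(S)$, and for $j\ge 2$, $N^j(S)=N(N^{j-1}(S))\setminus\bigl(N^{j-2}(S)\cup N^{j-1}(S)\bigr)$. *)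

(* A finite simple graph is a symmetric irreflexive relation
   e on a finType T (the vertex set; n = #|T|). *)
From mathcomp Require Import all_boot.
Set Implicit Arguments. Unset Strict Implicit. Unset Printing Implicit Defensive.

Section Graph.
Variables (T : finType) (e : rel T).

Definition simple_graph : Prop := symmetric e /\ irreflexive e.

Definition walk (u v : T) (p : seq T) : bool := path e u p && (last u p == v).

Definition connected_graph : Prop := forall u v : T, exists p, walk u v p.

Definition dist_le (u v : T) (m : nat) : Prop :=
  exists p, walk u v p /\ size p <= m.

Definition diam_ge (m : nat) : Prop :=
  exists u v : T, ~ dist_le u v m.-1.

Definition k_independent (k : nat) (S : {set T}) : Prop :=
  forall x y, x \in S -> y \in S -> x != y -> ~ dist_le x y k.

Definition deg (v : T) : nat := #|[set w | e v w]|.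

Definition min_degree (d : nat) : Prop :=
  (forall v, d <= deg v) /\ (exists v, deg v = d).

Definition nbhd (A : {set T}) : {set T} := [set y | [exists x in A, e x y]].

(* pairs (N^j(S), N^{j+1}(S)) *)
Fixpoint Npair (S : {set T}) (j : nat) : {set T} * {set T} :=
  match j with
  | 0 => (S, nbhd S)
  | j'.+1 => let: (a, b) := Npair S j' in (b, nbhd b :\: (a :|: b))
  end.

Definition Nj (S : {set T}) (j : nat) : {set T} := (Npair S j).1.

End Graph.

(* Grow balls B_r around the vertices and around S; N^j(S) is the sphere
   B_j(S) \ B_{j-1}(S) because S has no internal edges, so the left-hand side
   counts the annulus B_{i+1}(S) \ B_{i-2}(S).  As 2(i+1) <= k, the annuli
   B_{i+1}(s) \ B_{i-2}(s), s in S, are pairwise disjoint and lie inside it.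
   Since diam(G) > k, no B_{i+1}(s) is the whole connected graph, so the
   spheres of radii i-1, i, i+1 about s are non-empty: each annulus has at
   least 3 vertices, and it contains the closed neighbourhood, of size at least
   delta + 1, of any vertex at distance i from s. *)

From mathcomp Require Import all_boot zify.
Set Implicit Arguments. Unset Strict Implicit. Unset Printing Implicit Defensive.

Section Distance.
Variables (T : finType) (e : rel T).

Lemma dist_le_mono u v m n : m <= n -> dist_le e u v m -> dist_le e u v n.
Proof. by move=> mn [p [uv pm]]; exists p; split=> //; apply: leq_trans mn. Qed.

Lemma dist_le_trans u v w m n :
  dist_le e u v m -> dist_le e v w n -> dist_le e u w (m + n).
Proof.
move=> [p [/andP[up /eqP pv] pm]] [q [/andP[vq /eqP qw] qn]].
exists (p ++ q); split; last by rewrite size_cat leq_add.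
by rewrite /walk cat_path last_cat pv up vq qw eqxx.
Qed.

Hypothesis e_sym : symmetric e.

Lemma dist_le_sym u v m : dist_le e u v m -> dist_le e v u m.
Proof.
move=> [p [/andP[up /eqP <-] pm]].
exists (rev (belast u p)); split; last by rewrite size_rev size_belast.
rewrite /walk rev_path (@eq_path _ _ e) => [|x y]; last by rewrite /= e_sym.
by rewrite up; case: p {up pm} => [|x p] //=; rewrite rev_cons last_rcons.
Qed.

End Distance.

Section Balls.
Variables (T : finType) (e : rel T).
Implicit Types (A : {set T}) (m n : nat).

Fixpoint ball A m : {set T} :=
  if m is m'.+1 then ball A m' :|: nbhd e (ball A m') else A.

Lemma in_nbhd A y : (y \in nbhd e A) = [exists x in A, e x y].
Proof. by rewrite inE. Qed.

Lemma mem_ballS A m y :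
  (y \in ball A m.+1) = (y \in ball A m) || [exists x in ball A m, e x y].
Proof. by rewrite in_setU in_nbhd. Qed.

Lemma ball_adj A m x y : x \in ball A m -> e x y -> y \in ball A m.+1.
Proof.
by move=> xA exy; rewrite mem_ballS; apply/orP; right; apply/exists_inP; exists x.
Qed.

Lemma subset_ballS A m : ball A m \subset ball A m.+1.
Proof. exact: subsetUl. Qed.

Lemma ball_mono A : {homo ball A : m n / m <= n >-> m \subset n}.
Proof.
apply: homo_leq => [B|B C D|m];
  [exact: subxx | exact: subset_trans | exact: subset_ballS].
Qed.

Lemma ball_dist A m y :
  y \in ball A m <-> exists2 a, a \in A & dist_le e a y m.
Proof.
elim: m y => [|m IH] y.
  split=> [yA|[a aA [p [/andP[_ /eqP <-]]]]].
    by exists y => //; exists [::]; rewrite /walk eqxx.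
  by rewrite leqn0 size_eq0 => /eqP->.
split=> [|[a aA [p]]].
  rewrite mem_ballS => /orP[/IH[a aA /(dist_le_mono (leqnSn m)) ay]|].
    by exists a.
  case/exists_inP=> x /IH[a aA [p [/andP[ap /eqP px] pm]]] exy.
  exists a => //; exists (rcons p y); split; last by rewrite size_rcons.
  by rewrite /walk rcons_path last_rcons ap px exy eqxx.
case/lastP: p => [|p x] [/andP[ap /eqP <-] pm].
  apply: (subsetP (subset_ballS _ _)); apply/IH.
  by exists a => //; exists [::]; rewrite /walk eqxx.
move: ap pm; rewrite rcons_path last_rcons size_rcons ltnS => /andP[ap exy] pm.
by apply: ball_adj exy; apply/IH; exists a => //; exists p; rewrite /walk ap eqxx.
Qed.

Lemma ball_proper A a w r t : connected_graph e -> a \in A ->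
  w \notin ball A r -> t <= r -> ball A t \proper ball A t.+1.
Proof.
move=> conn aA wr tr; rewrite properEneq subset_ballS andbT.
apply: contraNneq wr => /esym ball_tS.
have [p apw] := conn a w.
have wp : w \in ball A (size p) by apply/ball_dist; exists a => //; exists p.
have ball_t n : ball A (t + n) = ball A t.
  by elim: n => [|n IHn]; rewrite ?addn0 // addnS /= IHn.
apply: (subsetP (ball_mono A tr)); rewrite -(ball_t (size p)).
exact: subsetP (ball_mono A (leq_addl t _)) _ wp.
Qed.

Lemma leq_card_annulus A a w m l : connected_graph e -> a \in A ->
  w \notin ball A (m + l) -> l <= #|ball A (m + l) :\: ball A m|.
Proof.
move=> conn aA; rewrite cardsD (setIidPr (ball_mono A (leq_addr l m))).
rewrite leq_subRL ?subset_leq_card ?ball_mono ?leq_addr //.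
elim: l => [|l IHl]; first by rewrite !addn0.
rewrite !addnS => wml; apply: leq_ltn_trans (IHl _) (proper_card _).
  by apply: contra wml => /(subsetP (subset_ballS _ _)).
exact: ball_proper conn aA wml (leqnSn _).
Qed.

Lemma mem_ball1 s m y : y \in ball [set s] m <-> dist_le e s y m.
Proof.
split=> [/ball_dist[a /set1P-> //]|sy].
by apply/ball_dist; exists s; rewrite ?set11.
Qed.

End Balls.

Section Spheres.
Variables (T : finType) (e : rel T).
Hypothesis e_sym : symmetric e.
Implicit Types (A S : {set T}) (m j : nat).

Definition sphere A m : {set T} :=
  ball e A m :\: (if m is m'.+1 then ball e A m' else set0).

Lemma mem_sphere0 A x : (x \in sphere A 0) = (x \in A).
Proof. by rewrite in_setD in_set0. Qed.

Lemma mem_sphereS A m x :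
  (x \in sphere A m.+1) = (x \notin ball e A m) && (x \in ball e A m.+1).
Proof. exact: in_setD. Qed.

Lemma sphere_sub_ball A m : sphere A m \subset ball e A m.
Proof. exact: subsetDl. Qed.

Lemma card_sphereS A m : #|sphere A m.+1| = #|ball e A m.+1| - #|ball e A m|.
Proof. by rewrite cardsD (setIidPr (subset_ballS _ _ _)). Qed.

Lemma nbhd_sphere A j :
  nbhd e (sphere A j.+1) :\: (sphere A j :|: sphere A j.+1) = sphere A j.+2.
Proof.
apply/setP => x; rewrite in_setD in_setU in_nbhd !mem_sphereS.
apply/idP/idP.
- case/andP=> /norP[xNj xNj1] /exists_inP[y]; rewrite mem_sphereS.
  case/andP=> yNj yj1 yx; rewrite (ball_adj yj1 yx) andbT.
  apply: contra xNj1 => xj1; rewrite xj1 andbT; apply: contra xNj => xj.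
  case: j {yj1 xj1} xj yNj => [|j] xj yNj; first by rewrite mem_sphere0.
  rewrite mem_sphereS xj andbT; apply: contra yNj => /ball_adj; apply.
  by rewrite e_sym.
- case/andP=> xNj1 /[dup] xj2; rewrite mem_ballS (negbTE xNj1) /=.
  case/exists_inP=> y yj1 yx; rewrite andbF orbF; apply/andP; split.
    apply: contra xNj1 => /(subsetP (sphere_sub_ball _ _)).
    exact: (subsetP (subset_ballS _ _ _)).
  apply/exists_inP; exists y => //; rewrite mem_sphereS yj1 andbT.
  by apply: contra xNj1 => /ball_adj; apply.
Qed.

Lemma Npair_sphere S : {in S &, forall x y, ~~ e x y} ->
  forall j, Npair e S j = (sphere S j, sphere S j.+1).
Proof.
move=> S_edgeless; elim=> [|j IHj] /=; last by rewrite IHj nbhd_sphere.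
congr pair; apply/setP => x; first by rewrite mem_sphere0.
rewrite /= in_setD in_setU in_nbhd; case: (boolP (x \in S)) => //= xS.
by apply/exists_inP => -[y yS]; apply/negP; exact: S_edgeless.
Qed.

Lemma Nj_sphere S j : {in S &, forall x y, ~~ e x y} -> Nj e S j = sphere S j.
Proof. by move=> S_edgeless; rewrite /Nj Npair_sphere. Qed.

Lemma card_Nj_window S m : {in S &, forall x y, ~~ e x y} ->
  #|Nj e S m.+1| + #|Nj e S m.+2| + #|Nj e S m.+3| =
  #|ball e S m.+3 :\: ball e S m|.
Proof.
move=> S_edgeless; rewrite !Nj_sphere // !card_sphereS.
have sub : ball e S m \subset ball e S m.+3 by apply: ball_mono; lia.
have le_card n : #|ball e S n| <= #|ball e S n.+1|.
  exact/subset_leq_card/subset_ballS.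
rewrite cardsD (setIidPr sub).
by have := le_card m; have := le_card m.+1; have := le_card m.+2; lia.
Qed.

End Spheres.

Lemma leq_mul_card_disjoint (T I : finType) (J : {set I}) (F : I -> {set T})
    (U : {set T}) b :
  0 < b -> {in J &, forall i j, j != i -> [disjoint F i & F j]} ->
  (forall i, i \in J -> F i \subset U /\ b <= #|F i|) -> b * #|J| <= #|U|.
Proof.
move=> b_gt0 disjF FU.
have F_neq0 : set0 \notin F @: J.
  apply/imsetP => -[i iJ F0]; have [_] := FU i iJ.
  by rewrite -F0 cards0 leqNgt b_gt0.
have [/eqP tiF injF] := trivIimset disjF F_neq0.
rewrite mulnC -sum_nat_const (@leq_trans (\sum_(i in J) #|F i|)) //.
  by apply: leq_sum => i /FU[].
rewrite -(big_imset (fun B : {set T} => #|B|) injF) /= tiF cover_imset.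
by apply/subset_leq_card/bigcupsP => i /FU[].
Qed.

Section SimpleGraph.
Variables (T : finType) (e : rel T).
Hypothesis e_sym : symmetric e.

Lemma exists_outside_ball d s r :
  diam_ge e d.+1 -> r + r <= d -> exists w, w \notin ball e [set s] r.
Proof.
move=> [u [v uv]] rd.
case: (boolP (u \in ball e [set s] r)) => [/mem_ball1 su|]; last by exists u.
case: (boolP (v \in ball e [set s] r)) => [/mem_ball1 sv|]; last by exists v.
case: uv; apply: dist_le_mono rd _.
exact: dist_le_trans (dist_le_sym e_sym su) sv.
Qed.

Hypothesis e_irr : irreflexive e.

Lemma leq_deg_annulus A m x : x \in ball e A m.+2 :\: ball e A m.+1 ->
  (deg e x).+1 <= #|ball e A m.+3 :\: ball e A m|.
Proof.
rewrite in_setD => /andP[xN1 x2].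
have : x |: [set y | e x y] \subset ball e A m.+3 :\: ball e A m.
  apply/subsetP => y; rewrite in_setU1 inE in_setD => /predU1P[->|xy].
    rewrite (subsetP (subset_ballS _ _ _) _ x2) andbT.
    by apply: contra xN1 => /(subsetP (ball_mono _ _ (leqnSn m))).
  rewrite (ball_adj x2 xy) andbT; apply: contra xN1 => /ball_adj; apply.
  by rewrite e_sym.
by move/subset_leq_card; rewrite cardsU1 inE e_irr.
Qed.

Lemma k_independent_edgeless k S :
  0 < k -> k_independent e k S -> {in S &, forall x y, ~~ e x y}.
Proof.
move=> k_gt0 S_indep x y xS yS; apply/negP => xy.
have [xy_eq|x_neq_y] := eqVneq x y; first by rewrite xy_eq e_irr in xy.
by apply: S_indep xS yS x_neq_y _; exists [:: y]; rewrite /walk /= xy eqxx.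
Qed.

End SimpleGraph.

Section IndependentSet.
Variables (T : finType) (e : rel T) (k : nat) (S : {set T}).
Hypotheses (e_sym : symmetric e) (S_indep : k_independent e k S).

Lemma disjoint_balls s s' m : s \in S -> s' \in S -> s' != s -> m + m <= k ->
  [disjoint ball e [set s] m & ball e [set s'] m].
Proof.
move=> sS s'S s's mk; rewrite -setI_eq0; apply/eqP/setP => x.
rewrite in_setI in_set0; apply/negP => /andP[/mem_ball1 sx /mem_ball1 s'x].
apply: S_indep sS s'S _ _; first by rewrite eq_sym.
by apply: dist_le_mono mk _; apply: dist_le_trans sx (dist_le_sym e_sym s'x).
Qed.

Lemma annulus_subset s m n : s \in S -> m + n <= k ->
  ball e [set s] n :\: ball e [set s] m \subset ball e S n :\: ball e S m.
Proof.
move=> sS mnk; apply/subsetP => x; rewrite !in_setD => /andP[xNm /mem_ball1 sx].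
apply/andP; split; last by apply/ball_dist; exists s.
apply/negP => /ball_dist[s' s'S s'x].
have [ss'|ss'] := eqVneq s s'.
  by move/negP: xNm; apply; apply/mem_ball1; rewrite ss'.
apply: S_indep sS s'S ss' _; rewrite addnC in mnk.
by apply: dist_le_mono mnk _; apply: dist_le_trans sx (dist_le_sym e_sym s'x).
Qed.

Lemma leq_mul_card_annulus m n b : m <= n -> n + n <= k -> 0 < b ->
  (forall s, s \in S -> b <= #|ball e [set s] n :\: ball e [set s] m|) ->
  b * #|S| <= #|ball e S n :\: ball e S m|.
Proof.
move=> mn nk b_gt0 annulus_ge.
pose annulus s := ball e [set s] n :\: ball e [set s] m.
apply: (@leq_mul_card_disjoint _ _ S annulus _ b b_gt0).
  move=> s s' sS s'S s's.
  exact: disjointW (subsetDl _ _) (subsetDl _ _) (disjoint_balls sS s'S s's nk).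
move=> s sS; split; last exact: annulus_ge.
by apply: annulus_subset sS _; apply: leq_trans nk; rewrite leq_add2r.
Qed.

End IndependentSet.

Theorem lemma1 (T : finType) (e : rel T) (k delta : nat) (S : {set T}) (i : nat) :
  simple_graph e -> connected_graph e ->
  0 < k -> diam_ge e k.+1 -> min_degree e delta ->
  k_independent e k S ->
  3 <= i -> 2 * i + 2 <= k ->
  3 * #|S| <= #|Nj e S i.-1| + #|Nj e S i| + #|Nj e S i.+1| /\
  (2 <= delta ->
   (delta + 1) * #|S| <= #|Nj e S i.-1| + #|Nj e S i| + #|Nj e S i.+1|).
Proof.
move=> [e_sym e_irr] conn k_gt0 diam [min_deg _] S_indep i_ge3 ik.
have [m i_eq] : exists m, i = m.+2 by exists i.-2; lia.
subst i; have [m_le sep] : m <= m.+3 /\ m.+3 + m.+3 <= k by lia.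
rewrite (card_Nj_window e_sym m (k_independent_edgeless e_irr k_gt0 S_indep)).
have far s : exists w, w \notin ball e [set s] m.+3.
  exact: (exists_outside_ball e_sym s diam sep).
split=> [|_]; apply: (leq_mul_card_annulus e_sym S_indep m_le sep);
  rewrite ?addn1 // => s _; have [w sw] := far s.
  by rewrite -[m.+3]addn3 in sw *; apply: leq_card_annulus conn (set11 s) sw.
have /properP[_ [x x2 xN1]] :=
  ball_proper conn (set11 s) sw (leqW (leqnSn m.+1)).
apply: leq_trans (leq_deg_annulus e_sym e_irr (_ : x \in _ :\: _)).
  by rewrite ltnS min_deg.
by rewrite in_setD xN1.
Qed.
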